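(* Let $G^1$ and $G^2$ be orable graphs. Then their Cartesian product $G^1\times G^2$ is orable.
   Context: A graph is a tuple $\langle V,s_1,s_2,\mathsf{null},\mathsf{root}\rangle$ with $V$ finite, $\mathsf{root}\neq\mathsf{null}$ in $V$, $s_1,s_2\subseteq V\times V$, and $\langle\mathsf{null},x\rangle\in s_i$ iff $x=\mathsf{null}$. A graph is orable if for all nodes $x$: $\langle\mathsf{root},x\rangle\in s_2$ iff $x=\mathsf{null}$. For $G^j=\langle V^j,s^j_1,s^j_2,\mathsf{null}^j,\mathsf{root}^j\rangle$ ($j=1,2$), the Cartesian product $G^1\times G^2=\langle V^0,s^0_1,s^0_2,\mathsf{null}^0,\mathsf{root}^0\rangle$ has $\mathsf{null}^0=\langle\mathsf{null}^1,\mathsf{null}^2\rangle$, $\mathsf{root}^0=\langle\mathsf{root}^1,\mathsf{root}^2\rangle$, $V^0=\{\mathsf{null}^0,\mathsf{root}^0\}\cup(V^1\setminus\{\mathsf{null}^1,\mathsf{root}^1\})\times(V^2\setminus\{\mathsf{null}^2,\mathsf{root}^2\})$, and $s^0_i$ is the set of pairs $\langle\langle x^1,x^2\rangle,\langle y^1,y^2\rangle\rangle$ of elements of $V^0$ with $\langle x^1,y^1\rangle\in s^1_i$ and $\langle x^2,y^2\rangle\in s^2_i$. *)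

From mathcomp Require Import all_boot.
Set Implicit Arguments. Unset Strict Implicit. Unset Printing Implicit Defensive.

Record pregraph := PreGraph {
  gV : finType;
  gs1 : rel gV;
  gs2 : rel gV;
  gnull : gV;
  groot : gV }.

Definition is_graph (G : pregraph) : Prop :=
  groot G <> gnull G /\
  (forall x, gs1 (gnull G) x <-> x = gnull G) /\
  (forall x, gs2 (gnull G) x <-> x = gnull G).

Definition orable (G : pregraph) : Prop :=
  forall x, gs2 (groot G) x <-> x = gnull G.

Section Product.
Variables G1 G2 : pregraph.

Definition prodP : pred (gV G1 * gV G2) := fun p =>
  [|| p == (gnull G1, gnull G2), p == (groot G1, groot G2) |
      (p.1 \notin [:: gnull G1; groot G1]) && (p.2 \notin [:: gnull G2; groot G2])].

Definition prodV : finType := {p : gV G1 * gV G2 | prodP p}.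

Lemma prod_null_subproof : prodP (gnull G1, gnull G2).
Proof. by rewrite /prodP eqxx. Qed.
Lemma prod_root_subproof : prodP (groot G1, groot G2).
Proof. by rewrite /prodP eqxx orbT. Qed.

Definition prod_null : prodV := exist (fun p => prodP p) _ prod_null_subproof.
Definition prod_root : prodV := exist (fun p => prodP p) _ prod_root_subproof.

Definition prod_s1 : rel prodV := fun x y =>
  gs1 (val x).1 (val y).1 && gs1 (val x).2 (val y).2.
Definition prod_s2 : rel prodV := fun x y =>
  gs2 (val x).1 (val y).1 && gs2 (val x).2 (val y).2.

Definition graph_prod : pregraph :=
  @PreGraph prodV prod_s1 prod_s2 prod_null prod_root.
End Product.

From mathcomp Require Import all_boot.

(* Each of the three conditions says that some point has the null node as
   its only successor; in the product the successors of a pair are exactly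
   the pairs of successors, and the only vertex of the product whose two
   components are null is the product's null. *)

Section ProductNull.
Variables G1 G2 : pregraph.

Lemma prod_nullP (x : prodV G1 G2) :
  x = prod_null G1 G2 <-> (val x).1 = gnull G1 /\ (val x).2 = gnull G2.
Proof.
split=> [-> // | [x1 x2]].
by apply: val_inj; case: x x1 x2 => [[a b] ?] /= -> ->.
Qed.

Lemma prod_root_neq_null : groot G1 <> gnull G1 -> prod_root G1 G2 <> prod_null G1 G2.
Proof. by move=> root_neq_null /prod_nullP [/= /root_neq_null]. Qed.

Lemma prod_succ_null (r1 : rel (gV G1)) (r2 : rel (gV G2)) a1 a2 :
  (forall y, r1 a1 y <-> y = gnull G1) -> (forall y, r2 a2 y <-> y = gnull G2) ->
  forall x : prodV G1 G2, r1 a1 (val x).1 && r2 a2 (val x).2 <-> x = prod_null G1 G2.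
Proof.
move=> succ1 succ2 x; split.
- by case/andP=> /succ1 x1 /succ2 x2; apply/prod_nullP.
- by case/prod_nullP=> /succ1 x1 /succ2 x2; apply/andP.
Qed.

End ProductNull.

Theorem proposition31 (G1 G2 : pregraph) :
  is_graph G1 -> orable G1 -> is_graph G2 -> orable G2 ->
  is_graph (graph_prod G1 G2) /\ orable (graph_prod G1 G2).
Proof.
move=> [root_neq_null1 [null_s1_1 null_s2_1]] root_s2_1.
move=> [_ [null_s1_2 null_s2_2]] root_s2_2.
split; [split; [|split] |].
- exact: prod_root_neq_null.
- exact: prod_succ_null null_s1_1 null_s1_2.
- exact: prod_succ_null null_s2_1 null_s2_2.
- exact: prod_succ_null root_s2_1 root_s2_2.
Qed.
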